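(* Let $q$ be a nonzero complex number with $q^4\ne1$. Let $\zeta,\kappa,\zeta',\kappa'$ be nonzero complex numbers with $\zeta\neq\pm1$, $\kappa^4\neq 1$, $\zeta'\ne\pm1$, $(\kappa')^4\neq1$. Let $x,y$ and $x',y'$ be the standard bases of $V(\zeta,\kappa)$ and $V(\zeta',\kappa')$. If \[\phi: V(\zeta,\kappa)\otimes V(\zeta',\kappa')\to V(\zeta',\kappa')\otimes V(\zeta,\kappa)\] is a module isomorphism, then there are constants $a_1,a_2,b_1,b_2,c_1,c_2$ with \[\phi(x\otimes x')=a_2\,x'\otimes x,\quad \phi(x\otimes y')=c_2\,x'\otimes y+b_2\,y'\otimes x,\] \[\phi(y\otimes x')=b_1\,x'\otimes y+c_1\,y'\otimes x,\quad \phi(y\otimes y')=a_1\,y'\otimes y. \tag{$*$}\] Furthermore, a linear map $\phi$ of the form $( * )$ is a module homomorphism if and only if \[ \begin{aligned} &[\zeta]c_2+[\zeta']\zeta^{-1}b_2=[\zeta']a_2, && [\zeta]b_1+\zeta^{-1}[\zeta']c_1=[\zeta](\zeta')^{-1}a_2,\\ &[\zeta']\zeta^{-1}a_1=(\zeta')^{-1}[\zeta]c_2-[\zeta']b_1, && -[\zeta]a_1=(\zeta')^{-1}[\zeta]b_2-[\zeta']c_1,\\ &a_2=c_1+\zeta b_2, && \zeta'a_2=b_1+\zeta c_2,\\ &c_2-\zeta'b_2=a_1, && b_1-c_1\zeta'=-a_1\zeta. \end{aligned} \]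
   Context: $[\zeta]=\frac{\zeta-\zeta^{-1}}{q-q^{-1}}$. $U_q(\mathfrak{gl}(1|1))$ is the associative superalgebra generated by odd $E,F$ and even invertible commuting $W^{\pm1},K^{\pm1}$ with relations $KEK^{-1}=q^2E$, $KFK^{-1}=q^{-2}F$, $W$ central, $EF+FE=\frac{W-W^{-1}}{q-q^{-1}}$, $E^2=F^2=0$. It is a Hopf superalgebra with comultiplication $\Delta(W)=W\otimes W$, $\Delta(K)=K\otimes K$, $\Delta(E)=E\otimes W^{-1}+1\otimes E$, $\Delta(F)=F\otimes 1+W\otimes F$; tensor products of modules are formed via $\Delta$ with the sign rule $(a\otimes b)(v\otimes w)=(-1)^{|b||v|}(av\otimes bw)$ for homogeneous elements. For $\zeta,\kappa\in\mathbb{C}^\times$, $V(\zeta,\kappa)$ is the module with basis $x$ (even), $y$ (odd) and action $Ex=0$, $Fx=y$, $Wx=\zeta x$, $Kx=\kappa x$, $Fy=0$, $Ey=[\zeta]x$, $Wy=\zeta y$, $Ky=q^{-2}\kappa y$; similarly $V(\zeta',\kappa')$ has basis $x',y'$. A module homomorphism is a linear map commuting with the action of all generators. *)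

(* Complex numbers are modelled as R[i] = complex R for an
   arbitrary R : realType (every realType is a model of the real numbers). *)
From HB Require Import structures.
From mathcomp Require Import all_boot all_order all_algebra.
From mathcomp Require Import complex.
From mathcomp Require Import reals.
Set Implicit Arguments.
Unset Strict Implicit.
Unset Printing Implicit Defensive.
Import Order.TTheory GRing.Theory Num.Theory.
Local Open Scope ring_scope.

Section Gl11.
Variable C : fieldType.

Definition qbr (q z : C) : C := (z - z^-1) / (q - q^-1).

(* A representation of U_q(gl(1|1)) on the super vector space C^n, given by
   the matrices (acting on column coordinate vectors) of the generators
   E, F, W, W^-1, K, K^-1, together with the parity of each basis vector. *)
Record gl11rep (n : nat) := Gl11Rep {
  rE : 'M[C]_n; rF : 'M[C]_n;
  rW : 'M[C]_n; rWi : 'M[C]_n;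
  rK : 'M[C]_n; rKi : 'M[C]_n;
  rpar : 'I_n -> bool (* true = odd *) }.

Definition sgnmx n (p : 'I_n -> bool) : 'M[C]_n :=
  diag_mx (\row_i (if p i then -1 else 1)).

(* Elements of V1 (x) V2 with dim V1 = m, dim V2 = n are represented by
   coefficient matrices M : 'M_(m,n), M i j = coefficient of e_i (x) f_j;
   in particular the pure tensor v (x) w is v *m w^T. *)
Definition tens m n (v : 'cV[C]_m) (w : 'cV[C]_n) : 'M[C]_(m, n) := v *m w^T.

(* action of a (x) b on V1 (x) V2 with the sign rule
   (a (x) b)(v (x) w) = (-1)^{|b||v|} av (x) bw, where b has parity oddb *)
Definition tens_op m n (p1 : 'I_m -> bool) (A : 'M[C]_m) (B : 'M[C]_n)
  (oddb : bool) (M : 'M[C]_(m, n)) : 'M[C]_(m, n) :=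
  A *m (if oddb then sgnmx p1 *m M else M) *m B^T.

Section Tensor.
Variables (m n : nat) (V1 : gl11rep m) (V2 : gl11rep n).
Let p1 := rpar V1.
(* Delta(E) = E (x) W^-1 + 1 (x) E   (E odd, W^-1 even) *)
Definition tE M := tens_op p1 (rE V1) (rWi V2) false M + tens_op p1 1 (rE V2) true M.
Definition tF M := tens_op p1 (rF V1) 1 false M + tens_op p1 (rW V1) (rF V2) true M.
Definition tW M := tens_op p1 (rW V1) (rW V2) false M.
Definition tWi M := tens_op p1 (rWi V1) (rWi V2) false M.
Definition tK M := tens_op p1 (rK V1) (rK V2) false M.
Definition tKi M := tens_op p1 (rKi V1) (rKi V2) false M.
End Tensor.

Definition tens_hom m n m' n' (V1 : gl11rep m) (V2 : gl11rep n)
  (V3 : gl11rep m') (V4 : gl11rep n') (f : 'M[C]_(m, n) -> 'M[C]_(m', n')) :=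
  forall M,
  f (tE V1 V2 M) = tE V3 V4 (f M) /\ f (tF V1 V2 M) = tF V3 V4 (f M) /\
  f (tW V1 V2 M) = tW V3 V4 (f M) /\ f (tWi V1 V2 M) = tWi V3 V4 (f M) /\
  f (tK V1 V2 M) = tK V3 V4 (f M) /\ f (tKi V1 V2 M) = tKi V3 V4 (f M).

(* standard basis: x = e_0 (even), y = e_1 (odd) *)
Definition bx : 'cV[C]_2 := delta_mx 0 0.
Definition by_ : 'cV[C]_2 := delta_mx 1 0.

(* the module V(zeta, kappa) in the basis (x, y):
   Ex = 0, Ey = [zeta] x, Fx = y, Fy = 0, W = zeta, K x = kappa x,
   K y = q^-2 kappa y *)
Definition Vmod (q zeta kappa : C) : gl11rep 2 :=
  @Gl11Rep 2
    (\matrix_(i < 2, j < 2) if (i == 0) && (j == 1) then qbr q zeta else 0)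
    (\matrix_(i < 2, j < 2) if (i == 1) && (j == 0) then 1 else 0)
    (zeta%:M) (zeta^-1%:M)
    (diag_mx (\row_(i < 2) if i == 0 then kappa else q ^- 2 * kappa))
    (diag_mx (\row_(i < 2) if i == 0 then kappa^-1 else q ^+ 2 * kappa^-1))
    (fun i => i == 1).

End Gl11.

From HB Require Import structures.
From mathcomp Require Import all_boot all_order all_algebra.
From mathcomp Require Import complex.
From mathcomp Require Import reals.
From mathcomp Require Import ring zify.
Set Implicit Arguments.
Unset Strict Implicit.
Unset Printing Implicit Defensive.
Import GRing.Theory.
Local Open Scope ring_scope.

(* K acts diagonally on the tensor basis e_i (x) e_j of V(zeta, kappa) (x) V(zeta', kappa'),
   with eigenvalue kappa kappa' q^(-2(i+j)); as q^4 <> 1 these eigenvalues separate the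
   degrees i + j = 0, 1, 2, so a map commuting with K preserves the degree, which is
   exactly the shape ( * ).  For a map of shape ( * ), commuting with W and K is automatic,
   while the defects phi E - E phi and phi F - F phi are linear in the coordinates of the
   input, with coefficients the differences of the two sides of the eight equations. *)

Lemma ord2P (i : 'I_2) : i = 0 \/ i = 1.
Proof. by case: i => [[|[|//]] ?]; [left|right]; apply: val_inj. Qed.

Lemma lift0_ord2 : lift ord0 ord0 = 1 :> 'I_2. Proof. exact: val_inj. Qed.
Lemma ord0_ord2 : ord0 = 0 :> 'I_2. Proof. exact: val_inj. Qed.

Ltac mx2_ext :=
  apply/matrixP; let i := fresh "i" in let j := fresh "j" in
  move=> i j; case: (ord2P i) => ->; case: (ord2P j) => ->;
  rewrite !(mxE, big_ord_recl, big_ord0) /= ?lift0_ord2 ?ord0_ord2.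

Lemma tens_delta (F : fieldType) m n (i : 'I_m) (j : 'I_n) :
  tens (delta_mx i 0) (delta_mx j 0) = delta_mx i j :> 'M[F]_(m, n).
Proof. by rewrite /tens trmx_delta mul_delta_mx. Qed.

Lemma tens_op_diag (F : fieldType) m n (p : 'I_m -> bool) (d1 : 'rV[F]_m) (d2 : 'rV[F]_n) M :
  tens_op p (diag_mx d1) (diag_mx d2) false M = \matrix_(i, j) (d1 0 i * d2 0 j * M i j).
Proof.
rewrite /tens_op tr_diag_mx mul_diag_mx mul_mx_diag.
by apply/matrixP => i j; rewrite !mxE mulrAC.
Qed.

Lemma expf_inj_le2 (F : fieldType) (p : F) (m n : nat) :
  p != 0 -> p ^+ 2 != 1 -> (m <= 2)%N -> (n <= 2)%N -> p ^+ m = p ^+ n -> m = n.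
Proof.
move=> p0 p2; wlog le_mn : m n / (m <= n)%N => [hw|].
  by case/orP: (leq_total m n) => le m2 n2 e; [exact: hw | exact/esym/hw/esym].
move=> _ n2; rewrite -(subnKC le_mn) exprD -{1}[p ^+ m]mulr1.
move/(mulfI (expf_neq0 m p0))/esym.
have : (n - m <= 2)%N by lia.
case: (n - m)%N => [|[|[|//]]] _; first by rewrite addn0.
  by rewrite expr1 => p1; rewrite p1 expr1n eqxx in p2.
by move=> p21; rewrite p21 eqxx in p2.
Qed.

Section VmodTensorAction.
Variables (F : fieldType) (q z k z' k' : F).
Let V := Vmod q z k.
Let V' := Vmod q z' k'.

Lemma tE_Vmod M : tE V V' M =
  \matrix_(i, j) if i == 0 then
                   if j == 0 then qbr q z' * M 0 1 + z'^-1 * qbr q z * M 1 0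
                   else z'^-1 * qbr q z * M 1 1
                 else if j == 0 then - qbr q z' * M 1 1 else 0.
Proof. rewrite /tE /tens_op /sgnmx /=; mx2_ext; ring. Qed.

Lemma tF_Vmod M : tF V V' M =
  \matrix_(i, j) if i == 0 then if j == 0 then 0 else z * M 0 0
                 else if j == 0 then M 0 0 else M 0 1 - z * M 1 0.
Proof. rewrite /tF /tens_op /sgnmx /=; mx2_ext; ring. Qed.

Lemma tW_Vmod M : tW V V' M = (z * z') *: M.
Proof. rewrite /tW /tens_op /=; mx2_ext; ring. Qed.

Lemma tWi_Vmod M : tWi V V' M = (z^-1 * z'^-1) *: M.
Proof. rewrite /tWi /tens_op /=; mx2_ext; ring. Qed.

Lemma tK_Vmod M : tK V V' M = \matrix_(i, j) (k * k' * q ^- 2 ^+ (i + j) * M i j).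
Proof. rewrite /tK tens_op_diag; mx2_ext; ring. Qed.

Lemma tKi_Vmod M : tKi V V' M = \matrix_(i, j) (k^-1 * k'^-1 * q ^+ 2 ^+ (i + j) * M i j).
Proof. rewrite /tKi tens_op_diag; mx2_ext; ring. Qed.

End VmodTensorAction.

Section KWeights.
Variables (F : fieldType) (q z k z' k' : F).
Hypotheses (q_neq0 : q != 0) (q4_neq1 : q ^+ 4 != 1) (k_neq0 : k != 0) (k'_neq0 : k' != 0).
Let V := Vmod q z k.
Let V' := Vmod q z' k'.
Variable phi : {linear 'M[F]_2 -> 'M[F]_2}.
Hypothesis phiK : forall M, phi (tK V V' M) = tK V' V (phi M).

Lemma tK_Vmod_delta (a b : 'I_2) :
  tK V V' (delta_mx a b) = (k * k' * q ^- 2 ^+ (a + b)) *: delta_mx a b.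
Proof.
rewrite tK_Vmod; apply/matrixP => i j; rewrite !mxE.
by case: (i =P a) => [->|_]; case: (j =P b) => [->|_]; rewrite ?andbF ?mulr0.
Qed.

Lemma intertwinerK_delta_eq0 (a b i j : 'I_2) :
  (a + b != i + j)%N -> phi (delta_mx a b) i j = 0.
Proof.
move=> ab_neq_ij; have := phiK (delta_mx a b).
rewrite tK_Vmod_delta linearZ tK_Vmod => /matrixP/(_ i j); rewrite !mxE => e.
have p_neq0 : q ^- 2 != 0 by rewrite invr_eq0 expf_eq0.
have p2_neq1 : q ^- 2 ^+ 2 != 1 by rewrite exprVn -exprM invr_eq1.
have weight_neq : k * k' * (q ^- 2 ^+ (a + b) - q ^- 2 ^+ (i + j)) != 0.
  rewrite !mulf_neq0 // subr_eq0; apply: contra ab_neq_ij => /eqP.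
  by move/expf_inj_le2 => -> //; have := ltn_ord a; have := ltn_ord b;
     have := ltn_ord i; have := ltn_ord j; lia.
have : k * k' * (q ^- 2 ^+ (a + b) - q ^- 2 ^+ (i + j)) * phi (delta_mx a b) i j = 0.
  by rewrite mulrBr mulrBl e; ring.
by move/eqP; rewrite mulf_eq0 (negbTE weight_neq) => /eqP.
Qed.

Lemma intertwinerK_star_form : exists a1 a2 b1 b2 c1 c2 : F,
  [/\ phi (delta_mx 0 0) = a2 *: delta_mx 0 0,
      phi (delta_mx 0 1) = c2 *: delta_mx 0 1 + b2 *: delta_mx 1 0,
      phi (delta_mx 1 0) = b1 *: delta_mx 0 1 + c1 *: delta_mx 1 0 &
      phi (delta_mx 1 1) = a1 *: delta_mx 1 1].
Proof.
exists (phi (delta_mx 1 1) 1 1), (phi (delta_mx 0 0) 0 0),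
  (phi (delta_mx 1 0) 0 1), (phi (delta_mx 0 1) 1 0),
  (phi (delta_mx 1 0) 1 0), (phi (delta_mx 0 1) 0 1).
split; mx2_ext; rewrite ?mulr0 ?mulr1 ?addr0 ?add0r //.
all: by apply: intertwinerK_delta_eq0.
Qed.
End KWeights.

Section StarForm.
Variables (F : fieldType) (q z k z' k' a1 a2 b1 b2 c1 c2 : F).
Let V := Vmod q z k.
Let V' := Vmod q z' k'.

Definition star_map (M : 'M[F]_2) : 'M[F]_2 :=
  \matrix_(i, j) if i == 0 then if j == 0 then a2 * M 0 0 else c2 * M 0 1 + b1 * M 1 0
                 else if j == 0 then b2 * M 0 1 + c1 * M 1 0 else a1 * M 1 1.

Lemma linear_star_form (phi : {linear 'M[F]_2 -> 'M[F]_2}) :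
  phi (delta_mx 0 0) = a2 *: delta_mx 0 0 ->
  phi (delta_mx 0 1) = c2 *: delta_mx 0 1 + b2 *: delta_mx 1 0 ->
  phi (delta_mx 1 0) = b1 *: delta_mx 0 1 + c1 *: delta_mx 1 0 ->
  phi (delta_mx 1 1) = a1 *: delta_mx 1 1 ->
  phi =1 star_map.
Proof.
move=> phi00 phi01 phi10 phi11 M.
rewrite [M in phi M]matrix_sum_delta !(big_ord_recl, big_ord0) /= lift0_ord2 ord0_ord2.
rewrite !addr0 !linearD !linearZ /= phi00 phi01 phi10 phi11; mx2_ext; ring.
Qed.

Lemma star_map_tE M :
  star_map (tE V V' M) - tE V' V (star_map M) =
  \matrix_(i, j)
    if i == 0 then
      if j == 0 then
        (qbr q z' * a2 - (qbr q z * c2 + qbr q z' * z^-1 * b2)) * M 0 1 +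
        (qbr q z * z'^-1 * a2 - (qbr q z * b1 + z^-1 * qbr q z' * c1)) * M 1 0
      else (z'^-1 * qbr q z * c2 - qbr q z' * b1 - qbr q z' * z^-1 * a1) * M 1 1
    else if j == 0 then
      (z'^-1 * qbr q z * b2 - qbr q z' * c1 - - (qbr q z * a1)) * M 1 1
    else 0.
Proof. rewrite !tE_Vmod; mx2_ext; ring. Qed.

Lemma star_map_tF M :
  star_map (tF V V' M) - tF V' V (star_map M) =
  \matrix_(i, j)
    if i == 0 then
      if j == 0 then 0 else (b1 + z * c2 - z' * a2) * M 0 0
    else if j == 0 then (c1 + z * b2 - a2) * M 0 0
    else (a1 - (c2 - z' * b2)) * M 0 1 + (- (a1 * z) - (b1 - c1 * z')) * M 1 0.
Proof. rewrite !tF_Vmod; mx2_ext; ring. Qed.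

Lemma star_map_WK M :
  [/\ star_map (tW V V' M) = tW V' V (star_map M),
      star_map (tWi V V' M) = tWi V' V (star_map M),
      star_map (tK V V' M) = tK V' V (star_map M) &
      star_map (tKi V V' M) = tKi V' V (star_map M)].
Proof. by rewrite !(tW_Vmod, tWi_Vmod, tK_Vmod, tKi_Vmod); split; mx2_ext; ring. Qed.

Lemma star_map_tEP :
  (forall M, star_map (tE V V' M) = tE V' V (star_map M)) <->
  [/\ qbr q z * c2 + qbr q z' * z^-1 * b2 = qbr q z' * a2,
      qbr q z * b1 + z^-1 * qbr q z' * c1 = qbr q z * z'^-1 * a2,
      qbr q z' * z^-1 * a1 = z'^-1 * qbr q z * c2 - qbr q z' * b1 &
      - (qbr q z * a1) = z'^-1 * qbr q z * b2 - qbr q z' * c1].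
Proof.
split=> [comm | [e1 e2 e3 e4] M]; last first.
  by apply/eqP; rewrite -subr_eq0 star_map_tE e1 e2 e3 e4 !subrr; apply/eqP; mx2_ext; ring.
have defect0 M i j : (star_map (tE V V' M) - tE V' V (star_map M)) i j = 0.
  by rewrite comm subrr mxE.
split; apply/esym/subr0_eq.
- by have := defect0 (delta_mx 0 1) 0 0; rewrite star_map_tE !mxE /= mulr1 mulr0 addr0.
- by have := defect0 (delta_mx 1 0) 0 0; rewrite star_map_tE !mxE /= mulr1 mulr0 add0r.
- by have := defect0 (delta_mx 1 1) 0 1; rewrite star_map_tE !mxE /= mulr1.
- by have := defect0 (delta_mx 1 1) 1 0; rewrite star_map_tE !mxE /= mulr1.
Qed.

Lemma star_map_tFP :
  (forall M, star_map (tF V V' M) = tF V' V (star_map M)) <->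
  [/\ a2 = c1 + z * b2, z' * a2 = b1 + z * c2,
      c2 - z' * b2 = a1 & b1 - c1 * z' = - (a1 * z)].
Proof.
split=> [comm | [e5 e6 e7 e8] M]; last first.
  by apply/eqP; rewrite -subr_eq0 star_map_tF e6 e5 e7 e8 !subrr; apply/eqP; mx2_ext; ring.
have defect0 M i j : (star_map (tF V V' M) - tF V' V (star_map M)) i j = 0.
  by rewrite comm subrr mxE.
split; apply/esym/subr0_eq.
- by have := defect0 (delta_mx 0 0) 1 0; rewrite star_map_tF !mxE /= mulr1.
- by have := defect0 (delta_mx 0 0) 0 1; rewrite star_map_tF !mxE /= mulr1.
- by have := defect0 (delta_mx 0 1) 1 1; rewrite star_map_tF !mxE /= mulr1 mulr0 addr0.
- by have := defect0 (delta_mx 1 0) 1 1; rewrite star_map_tF !mxE /= mulr1 mulr0 add0r.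
Qed.

Lemma tens_hom_star_formP (phi : {linear 'M[F]_2 -> 'M[F]_2}) :
  phi (delta_mx 0 0) = a2 *: delta_mx 0 0 ->
  phi (delta_mx 0 1) = c2 *: delta_mx 0 1 + b2 *: delta_mx 1 0 ->
  phi (delta_mx 1 0) = b1 *: delta_mx 0 1 + c1 *: delta_mx 1 0 ->
  phi (delta_mx 1 1) = a1 *: delta_mx 1 1 ->
  tens_hom V V' V' V phi <->
  (qbr q z * c2 + qbr q z' * z^-1 * b2 = qbr q z' * a2 /\
   qbr q z * b1 + z^-1 * qbr q z' * c1 = qbr q z * z'^-1 * a2 /\
   qbr q z' * z^-1 * a1 = z'^-1 * qbr q z * c2 - qbr q z' * b1 /\
   - (qbr q z * a1) = z'^-1 * qbr q z * b2 - qbr q z' * c1 /\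
   a2 = c1 + z * b2 /\ z' * a2 = b1 + z * c2 /\
   c2 - z' * b2 = a1 /\ b1 - c1 * z' = - (a1 * z)).
Proof.
move=> phi00 phi01 phi10 phi11; have phiE := linear_star_form phi00 phi01 phi10 phi11.
split=> [hom | [e1 [e2 [e3 [e4 [e5 [e6 [e7 e8]]]]]]] M].
  have /star_map_tEP[e1 e2 e3 e4] : forall M, star_map (tE V V' M) = tE V' V (star_map M).
    by move=> M; rewrite -!phiE; case: (hom M).
  have /star_map_tFP[e5 e6 e7 e8] : forall M, star_map (tF V V' M) = tF V' V (star_map M).
    by move=> M; rewrite -!phiE; case: (hom M) => _ [].
  by [].
rewrite !phiE; have [-> -> -> ->] := star_map_WK M.
by rewrite (star_map_tEP.2 (And4 e1 e2 e3 e4)) (star_map_tFP.2 (And4 e5 e6 e7 e8)).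
Qed.
End StarForm.

Local Open Scope complex_scope.

Theorem proposition4p2 (R : realType) (q zeta kappa zeta' kappa' : R[i]) :
  q != 0 -> q ^+ 4 != 1 ->
  zeta != 0 -> kappa != 0 -> zeta' != 0 -> kappa' != 0 ->
  zeta != 1 -> zeta != -1 -> kappa ^+ 4 != 1 ->
  zeta' != 1 -> zeta' != -1 -> kappa' ^+ 4 != 1 ->
  let V := Vmod q zeta kappa in
  let V' := Vmod q zeta' kappa' in
  let x := bx R[i] in let y := by_ R[i] in
  (* part 1: isomorphisms have the form ( * ) *)
  (forall phi : {linear 'M[R[i]]_(2, 2) -> 'M[R[i]]_(2, 2)},
     tens_hom V V' V' V phi -> bijective phi ->
     exists a1 a2 b1 b2 c1 c2 : R[i],
       [/\ phi (tens x x) = a2 *: tens x x,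
           phi (tens x y) = c2 *: tens x y + b2 *: tens y x,
           phi (tens y x) = b1 *: tens x y + c1 *: tens y x &
           phi (tens y y) = a1 *: tens y y]) /\
  (* part 2: characterisation of homomorphisms of the form ( * ) *)
  (forall (a1 a2 b1 b2 c1 c2 : R[i])
          (phi : {linear 'M[R[i]]_(2, 2) -> 'M[R[i]]_(2, 2)}),
     phi (tens x x) = a2 *: tens x x ->
     phi (tens x y) = c2 *: tens x y + b2 *: tens y x ->
     phi (tens y x) = b1 *: tens x y + c1 *: tens y x ->
     phi (tens y y) = a1 *: tens y y ->
     (tens_hom V V' V' V phi <->
      (qbr q zeta * c2 + qbr q zeta' * zeta^-1 * b2 = qbr q zeta' * a2 /\
       qbr q zeta * b1 + zeta^-1 * qbr q zeta' * c1 = qbr q zeta * zeta'^-1 * a2 /\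
       qbr q zeta' * zeta^-1 * a1 = zeta'^-1 * qbr q zeta * c2 - qbr q zeta' * b1 /\
       - (qbr q zeta * a1) = zeta'^-1 * qbr q zeta * b2 - qbr q zeta' * c1 /\
       a2 = c1 + zeta * b2 /\
       zeta' * a2 = b1 + zeta * c2 /\
       c2 - zeta' * b2 = a1 /\
       b1 - c1 * zeta' = - (a1 * zeta)))).
Proof.
(* Only q, kappa, kappa' need to be constrained, and isomorphisms are treated like
   arbitrary homomorphisms: commuting with K alone forces the shape ( * ). *)
move=> q_neq0 q4_neq1 _ k_neq0 _ k'_neq0 _ _ _ _ _ _ V V' x y.
rewrite /x /y /bx /by_ !tens_delta; split; last exact: tens_hom_star_formP.
move=> phi hom _; apply: (intertwinerK_star_form (z := zeta) (z' := zeta') q_neq0 q4_neq1 k_neq0 k'_neq0) => M.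
by case: (hom M) => _ [_ [_ [_ []]]].
Qed.
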